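(* For every positive integer $F$, the family $\mathrm{Sat}(F)$ is a covariety. Its minimum is $\Delta(F+1)=\{0\}\cup\{x\in\mathbb{N}\mid x\ge F+1\}$.
   Context: A numerical semigroup is a subset $S\subseteq\mathbb{N}$ closed under addition, containing $0$, with $\mathbb{N}\setminus S$ finite. Its Frobenius number $\mathrm{F}(S)$ is the largest integer not in $S$, and its multiplicity $\mathrm{m}(S)$ is $\min(S\setminus\{0\})$. For $A\subseteq\mathbb{N}$ and $a\in A$, let $\mathrm{d}_A(a)=\gcd\{x\in A\mid x\le a\}$. A numerical semigroup $S$ is saturated if $s+\mathrm{d}_S(s)\in S$ for all $s\in S\setminus\{0\}$. For a positive integer $F$, $\mathrm{Sat}(F)$ denotes the set of all saturated numerical semigroups $S$ with $\mathrm{F}(S)=F$. For $m\in\mathbb{N}$, $\Delta(m)=\{0\}\cup\{x\in\mathbb{N}\mid x\ge m\}$. A covariety is a nonempty family $\mathcal{C}$ of numerical semigroups such that: (1) $\mathcal{C}$ has a minimum $\Delta(\mathcal{C})$ with respect to inclusion; (2) if $S,T\in\mathcal{C}$ then $S\cap T\in\mathcal{C}$; (3) if $S\in\mathcal{C}$ and $S\neq\Delta(\mathcal{C})$, then $S\setminus\{\mathrm{m}(S)\}\in\mathcal{C}$. *)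

From mathcomp Require Import all_boot.
Set Implicit Arguments. Unset Strict Implicit. Unset Printing Implicit Defensive.

Definition numerical_semigroup (S : pred nat) : Prop :=
  [/\ S 0, (forall x y, S x -> S y -> S (x + y)) & (exists N, forall x, N <= x -> S x)].

Definition is_frobenius (S : pred nat) (F : nat) : Prop :=
  ~~ S F /\ (forall x, F < x -> S x).

Definition is_multiplicity (S : pred nat) (m : nat) : Prop :=
  [/\ 0 < m, S m & forall x, 0 < x < m -> ~~ S x].

Definition dA (A : pred nat) (a : nat) : nat :=
  \big[gcdn/0]_(0 <= x < a.+1 | A x) x.

Definition saturated (S : pred nat) : Prop :=
  forall s, S s -> s != 0 -> S (s + dA S s).

Definition Sat (F : nat) (S : pred nat) : Prop :=
  [/\ numerical_semigroup S, saturated S & is_frobenius S F].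

Definition Delta (m : nat) : pred nat := fun x => (x == 0) || (m <= x).

Definition subset_nat (A B : pred nat) : Prop := forall x, A x -> B x.

Definition is_minimum (C : pred nat -> Prop) (D : pred nat) : Prop :=
  C D /\ (forall S, C S -> subset_nat D S).

Definition covariety (C : pred nat -> Prop) : Prop :=
  (forall S, C S -> numerical_semigroup S) /\
  exists D : pred nat,
    [/\ is_minimum C D,
        (forall S T, C S -> C T -> C (fun x => S x && T x)) &
        (forall S m, C S -> ~ (S =i D) -> is_multiplicity S m ->
                     C (fun x => S x && (x != m)))].

(* If [S] is saturated then, starting from any nonzero [s] in [S], every
   multiple of [d_S(s)] can be added without leaving [S]: walking along
   [s, s + d, s + 2d, ...], the gcd [d_S] can only drop to a divisor [e] of
   [d], and then one walks by steps of [e] instead (induction on [d]).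
   Consequently, for [T] contained in a saturated [S], [s + d_T(s)] lies in
   [S] because [d_S(s)] divides [d_T(s)]; this gives closure of [Sat F]
   under intersection and under removal of the multiplicity [m]; the
   Frobenius number survives the removal because [m < F] unless [S] is
   [Delta (F + 1)].  The latter is the minimum since
   every semigroup with Frobenius number [F] contains it. *)
From mathcomp Require Import all_boot.
Set Implicit Arguments. Unset Strict Implicit. Unset Printing Implicit Defensive.

Lemma dA_dvdn (A : pred nat) a x : x <= a -> A x -> dA A a %| x.
Proof. by move=> xa Ax; rewrite /dA big_mkord (biggcdn_inf (Ordinal (xa : x < a.+1))). Qed.

Lemma dvdn_dA (A : pred nat) a m :
  (forall x, x <= a -> A x -> m %| x) -> m %| dA A a.
Proof.
move=> Hm; rewrite /dA big_mkord; apply/dvdn_biggcdP => i Ai.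
by apply: Hm => //; rewrite -ltnS.
Qed.

Lemma dA_gt0 (A : pred nat) s : A s -> s != 0 -> 0 < dA A s.
Proof.
move=> As s0; have := dA_dvdn (leqnn s) As.
by case: (dA A s) => //; rewrite dvd0n => /eqP s_eq0; rewrite s_eq0 in s0.
Qed.

Lemma dvdn_dA_leq (A : pred nat) a b : a <= b -> dA A b %| dA A a.
Proof. by move=> ab; apply: dvdn_dA => x xa; apply: dA_dvdn; apply: leq_trans ab. Qed.

Lemma dvdn_dA_sub (A B : pred nat) a : subset_nat A B -> dA B a %| dA A a.
Proof. by move=> AB; apply: dvdn_dA => x xa /AB; apply: dA_dvdn. Qed.

Section Saturated.

Variable S : pred nat.
Hypothesis satS : saturated S.

Lemma saturated_add_dvdn s x : S s -> s != 0 -> dA S s %| x -> S (s + x).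
Proof.
move=> Ss s0 /dvdnP[k ->]; have [d d_eq] : {d | dA S s = d} by exists (dA S s).
elim/ltn_ind: d s d_eq Ss s0 k => d IHd s d_eq Ss s0.
elim=> [|k IHk]; first by rewrite addn0.
rewrite d_eq in IHk *.
have t0 : s + k * d != 0 by rewrite addn_eq0 negb_and s0.
rewrite mulSn [d + _]addnC addnA.
have e_dvd_d : dA S (s + k * d) %| d by rewrite -d_eq dvdn_dA_leq ?leq_addr.
have [e_eq_d | e_neq_d] := eqVneq (dA S (s + k * d)) d.
  by rewrite -{2}e_eq_d satS.
have e_lt_d : dA S (s + k * d) < d.
  by rewrite ltn_neqAle e_neq_d dvdn_leq // -d_eq dA_gt0.
by rewrite -{2}(divnK e_dvd_d); apply: (IHd _ e_lt_d).
Qed.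

Lemma saturated_sub_add_dA (T : pred nat) s :
  subset_nat T S -> T s -> s != 0 -> S (s + dA T s).
Proof. by move=> TS Ts s0; rewrite saturated_add_dvdn ?TS ?dvdn_dA_sub. Qed.

End Saturated.

Lemma saturatedI (S T : pred nat) :
  saturated S -> saturated T -> saturated (fun x => S x && T x).
Proof.
move=> satS satT s STs s0.
by apply/andP; split; apply: saturated_sub_add_dA STs s0 => // x /andP[].
Qed.

Lemma numerical_semigroupI (S T : pred nat) :
  numerical_semigroup S -> numerical_semigroup T ->
  numerical_semigroup (fun x => S x && T x).
Proof.
move=> [S0 SD [N SN]] [T0 TD [M TM]]; split; first by rewrite S0.
  by move=> x y /andP[Sx Tx] /andP[Sy Ty]; rewrite SD ?TD.
exists (N + M) => x NMx.
by rewrite SN ?TM // (leq_trans _ NMx) ?leq_addl ?leq_addr.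
Qed.

Lemma is_frobeniusI (S T : pred nat) F :
  is_frobenius S F -> is_frobenius T F -> is_frobenius (fun x => S x && T x) F.
Proof.
by move=> [SF SFr] [_ TFr]; split=> [|x Fx] /=; [rewrite (negbTE SF) | rewrite SFr ?TFr].
Qed.

Section RemoveMultiplicity.

Variables (S : pred nat) (m : nat).
Hypothesis multS : is_multiplicity S m.

Let Sm := fun x => S x && (x != m).

Lemma multiplicity_leq x : S x -> x != 0 -> m <= x.
Proof.
case: multS => _ _ mmin Sx x0; rewrite leqNgt; apply/negP => xm.
by have := mmin x; rewrite lt0n x0 xm Sx => /(_ isT).
Qed.

Lemma numerical_semigroup_rem_multiplicity :
  numerical_semigroup S -> numerical_semigroup Sm.
Proof.
case: multS => m0 _ _ [S0 SD [N SN]]; split; first by rewrite /Sm S0 eq_sym -lt0n.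
  move=> x y /andP[Sx xm] /andP[Sy ym]; rewrite /Sm SD //=.
  have [->|x0] := eqVneq x 0; first by [].
  have [->|y0] := eqVneq y 0; first by rewrite addn0.
  have y_lt_xy : y < x + y by rewrite -{1}(add0n y) ltn_add2r lt0n.
  by rewrite neq_ltn (leq_ltn_trans (multiplicity_leq Sy y0) y_lt_xy) orbT.
exists (N + m.+1) => x Nx.
by rewrite /Sm SN ?neq_ltn ?(leq_trans _ Nx) ?leq_addl ?leq_addr ?orbT.
Qed.

Lemma saturated_rem_multiplicity : saturated S -> saturated Sm.
Proof.
move=> satS s Sms s0; have /andP[Ss sm] := Sms; apply/andP; split.
  by apply: saturated_sub_add_dA Sms s0 => // x /andP[].
have ms : m < s by rewrite ltn_neqAle eq_sym sm multiplicity_leq.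
by rewrite neq_ltn (leq_trans ms (leq_addr _ _)) orbT.
Qed.

Lemma is_frobenius_rem_multiplicity F :
  m < F -> is_frobenius S F -> is_frobenius Sm F.
Proof.
move=> mF [SF SFr]; split=> [|x Fx]; first by rewrite /Sm (negbTE SF).
by rewrite /Sm SFr // neq_ltn (ltn_trans mF Fx) orbT.
Qed.

Lemma multiplicity_lt_frobenius F :
  S 0 -> is_frobenius S F -> ~ S =i Delta F.+1 -> m < F.
Proof.
move=> S0 [SF SFr] S_neq_Delta; case: multS => _ S_m mmin.
rewrite ltn_neqAle leqNgt; apply/andP; split; first by apply: contraNneq SF => <-.
apply/negP => Fm; apply: S_neq_Delta => x; rewrite !unfold_in /Delta.
have [->|x0] /= := eqVneq x 0; first by rewrite S0.
have [Fx|xF] := leqP F.+1 x; first by rewrite SFr.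
by apply/negbTE/mmin; rewrite lt0n x0 (leq_trans xF).
Qed.

End RemoveMultiplicity.

Lemma Sat_Delta F : 0 < F -> Sat F (Delta F.+1).
Proof.
move=> F0; have Delta_addr x y : F.+1 <= x -> Delta F.+1 (x + y).
  by move=> Fx; rewrite /Delta (leq_trans Fx (leq_addr _ _)) orbT.
split.
- split=> //; last by exists F.+1 => x Fx; rewrite /Delta Fx orbT.
  by move=> x y /orP[/eqP-> // | /Delta_addr].
- by move=> s /orP[/eqP-> // | /Delta_addr].
- by split=> [|x Fx]; rewrite /Delta ?ltnn ?orbF -?lt0n // Fx orbT.
Qed.

Lemma Delta_sub_Sat F S : Sat F S -> subset_nat (Delta F.+1) S.
Proof. by case=> [[S0 _ _] _ [_ SFr]] x /orP[/eqP->|/SFr]. Qed.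

Theorem proposition16 (F : nat) (hF : 0 < F) :
  covariety (Sat F) /\ is_minimum (Sat F) (Delta F.+1).
Proof.
have minDelta : is_minimum (Sat F) (Delta F.+1).
  by split; [apply: Sat_Delta | apply: Delta_sub_Sat].
split=> //; split=> [S [] // | ]; exists (Delta F.+1); split=> //.
  move=> S T [nsS satS frobS] [nsT satT frobT].
  by split; [apply: numerical_semigroupI | apply: saturatedI | apply: is_frobeniusI].
move=> S m [nsS satS frobS] S_neq_Delta multS.
have mF : m < F.
  by case: nsS => S0 _ _; exact: (multiplicity_lt_frobenius multS S0 frobS S_neq_Delta).
split; [exact: numerical_semigroup_rem_multiplicity
       | exact: saturated_rem_multiplicity
       | exact: is_frobenius_rem_multiplicity].
Qed.
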